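(* On the classical Robba ring $\mathcal R(\mathbb Z_p,K)$ the nice topology coincides with the inductive limit topology.
   Context: $p$ is an odd prime, $K$ a complete discretely valued field with $\mathbb Q_p\subseteq K\subseteq\mathbb C_p$, $o_K$ its ring of integers. The classical Robba ring $\mathcal R(\mathbb Z_p,K)$ is the ring of Laurent series $\sum_{n\in\mathbb Z}a_nT^n$ ($a_n\in K$) converging on some annulus $r\le|T|<1$, i.e. with $|a_n|\rho^n\to0$ as $|n|\to\infty$ for all $\rho\in[r,1)$; here $T=\gamma-1$ for the generator $\gamma$ of $\mathbb Z_p$ (it is the case $G=\mathbb Z_p$, $d=1$, $b_1=T$ of the generalized Robba ring). For $r\le\rho<\rho'<1$ put $\|x\|_{\rho,\rho'}=\max(\sup_n|a_n|\rho^n,\sup_n|a_n|\rho'^n)$; $D_{[r,1)}(\mathbb Z_p,K)$ denotes the Fréchet space of series converging on $r\le|T|<1$ with the topology given by these norms, and the inductive limit topology on $\mathcal R(\mathbb Z_p,K)=\varinjlim_{r\to1}D_{[r,1)}(\mathbb Z_p,K)$ is the locally convex inductive limit topology. Nice topology: for $x_0=\sum_nc_{0,n}T^n$ let $L_{x_0}=\{\sum_nd_nT^n\in\mathcal R(\mathbb Z_p,K):|c_{0,-n}||d_n|\le1\ \forall n\}$; the nice topology is the locally convex topology in which an $o_K$-lattice is open iff it contains some $L_{x_0}$. *)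

From HB Require Import structures.
From mathcomp Require Import all_boot all_algebra.
From Stdlib Require Import Reals ZArith List.
Set Implicit Arguments. Unset Strict Implicit. Unset Printing Implicit Defensive.
Local Open Scope R_scope.

Definition nonarch_abs (K : fieldType) (abs : K -> R) : Prop :=
  (forall x, 0 <= abs x) /\
  (forall x, abs x = 0 <-> x = GRing.zero) /\
  (forall x y, abs (GRing.mul x y) = abs x * abs y) /\
  (forall x y, abs (GRing.add x y) <= Rmax (abs x) (abs y)).

Definition abs_complete (K : fieldType) (abs : K -> R) : Prop :=
  forall u : nat -> K,
    (forall eps, 0 < eps -> exists N : nat, forall m n : nat, (N <= m)%nat -> (N <= n)%nat ->
        abs (GRing.add (u m) (GRing.opp (u n))) < eps) ->
    exists l : K, forall eps, 0 < eps -> exists N : nat, forall n : nat, (N <= n)%nat ->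
        abs (GRing.add (u n) (GRing.opp l)) < eps.

Definition abs_discrete (K : fieldType) (abs : K -> R) : Prop :=
  exists pi : K, 0 < abs pi < 1 /\
    forall x : K, x <> GRing.zero -> exists k : Z, abs x = powerRZ (abs pi) k.

(* Q_p <= K <= C_p, K complete discretely valued: the absolute value extends
   the p-adic one (|p| = 1/p) and the residue field is algebraic over F_p
   (every residue class lies in some F_{p^n}). *)
Definition padic_cdvf (p : nat) (K : fieldType) (abs : K -> R) : Prop :=
  nonarch_abs abs /\ abs_complete abs /\ abs_discrete abs /\
  abs (GRing.natmul (GRing.one K) p) = / INR p /\
  (forall x : K, abs x <= 1 -> exists n : nat, (0 < n)%nat /\
      abs (GRing.add (GRing.exp x (p ^ n)) (GRing.opp x)) < 1).

(* ---------- Laurent series sum_n a_n T^n, a : Z -> K ---------- *)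

Definition ladd (K : fieldType) (a b : Z -> K) : Z -> K := fun n => GRing.add (a n) (b n).
Definition lsub (K : fieldType) (a b : Z -> K) : Z -> K :=
  fun n => GRing.add (a n) (GRing.opp (b n)).
Definition lscale (K : fieldType) (c : K) (a : Z -> K) : Z -> K := fun n => GRing.mul c (a n).
Definition lzero (K : fieldType) : Z -> K := fun _ => GRing.zero.

Definition D_int (K : fieldType) (abs : K -> R) (r : R) (a : Z -> K) : Prop :=
  forall rho, r <= rho < 1 -> forall eps, 0 < eps ->
    exists N : nat, forall n : Z, (Z.of_nat N <= Z.abs n)%Z ->
      abs (a n) * powerRZ rho n < eps.

Definition robba (K : fieldType) (abs : K -> R) (a : Z -> K) : Prop :=
  exists r, 0 < r < 1 /\ D_int abs r a.

Definition is_lattice (K : fieldType) (abs : K -> R) (L : (Z -> K) -> Prop) : Prop :=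
  (forall x, L x -> robba abs x) /\
  L (lzero K) /\
  (forall x y, L x -> L y -> L (ladd x y)) /\
  (forall c x, abs c <= 1 -> L x -> L (lscale c x)) /\
  (forall x, robba abs x -> exists c : K, c <> GRing.zero /\ L (lscale c x)).

Definition lc_open (K : fieldType) (abs : K -> R)
    (OL : ((Z -> K) -> Prop) -> Prop) (U : (Z -> K) -> Prop) : Prop :=
  (forall x, U x -> robba abs x) /\
  forall x, U x -> exists L, OL L /\ forall y, L y -> U (ladd x y).

Definition L_nice (K : fieldType) (abs : K -> R) (x0 : Z -> K) (d : Z -> K) : Prop :=
  robba abs d /\ forall n : Z, abs (x0 (- n)%Z) * abs (d n) <= 1.

Definition nice_open_lattice (K : fieldType) (abs : K -> R) (L : (Z -> K) -> Prop) : Prop :=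
  is_lattice abs L /\
  exists x0, robba abs x0 /\ forall d, L_nice abs x0 d -> L d.

Definition norm_le (K : fieldType) (abs : K -> R) (rho rho' eps : R) (b : Z -> K) : Prop :=
  forall n : Z, abs (b n) * powerRZ rho n <= eps /\ abs (b n) * powerRZ rho' n <= eps.

(* open subsets of the Frechet space D_[r,1)(Z_p,K), topology given by the
   family of norms ||.||_{rho,rho'}, r <= rho < rho' < 1 (finite intersections
   of balls form a basis at each point) *)
Definition frechet_open (K : fieldType) (abs : K -> R) (r : R) (U : (Z -> K) -> Prop) : Prop :=
  (forall x, U x -> D_int abs r x) /\
  forall x, U x -> exists (rhos : list (R * R)) (eps : R), 0 < eps /\
    (forall q, In q rhos -> r <= fst q /\ fst q < snd q /\ snd q < 1) /\
    forall y, D_int abs r y ->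
      (forall q, In q rhos -> norm_le abs (fst q) (snd q) eps (lsub y x)) -> U y.

Definition indlim_open_lattice (K : fieldType) (abs : K -> R) (L : (Z -> K) -> Prop) : Prop :=
  is_lattice abs L /\
  forall r, 0 < r < 1 -> frechet_open abs r (fun y => L y /\ D_int abs r y).

From HB Require Import structures.
From mathcomp Require Import all_boot all_algebra zify.
From Stdlib Require Import Reals ZArith List Lra Lia ClassicalEpsilon FunctionalExtensionality.
Open Scope R_scope.

Set Implicit Arguments. Unset Strict Implicit.

(* Nice open lattices are open for the inductive limit topology: if [L] contains
   [L_{x0}] with [x0] in [D_[r0,1)], let [rho >= r, r0] and [C] bound [|c_{0,m}| rho^m];
   then [|c_{0,-n}| |d_n| <= (|c_{0,-n}| rho^-n) (|d_n| rho^n) <= 1] as soon as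
   [||d||_{rho,rho'} <= 1/C], so [L] contains a ball of every [D_[r,1)].

   Conversely, let [L] be open for the inductive limit topology and [q = |pi|].  For
   radii [r_j -> 1] with [q <= r_j^(j+1)], [L] contains the balls
   [||.||_{r_j,s_j} <= q^(A j)] of [D_[r_j,1)].  Take [x0] with
   [|c_{0,-k}| = q^(k/(l+1) - A 0)], where [s_0^(l+1) <= q], and
   [|c_{0,m}| = q^-(min_{j<=m} (A j + m/(j+1) + 1))]; the minimum over [j] keeps [x0]
   in the Robba ring.  Each [d] in [L_{x0}] is the sum of its part of nonnegative degree
   (in the ball at level [0]), a tail of very negative degree (in the ball at a level
   where [d] converges) and finitely many monomials [d_{-m} T^-m] (each in the ball at
   the level realising the minimum for [m]); hence [d] lies in [L]. *)

Section NonarchimedeanAbs.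
Variables (K : fieldType) (abs : K -> R).
Hypothesis habs : nonarch_abs abs.

Lemma abs_ge0 x : 0 <= abs x.
Proof. by case: habs. Qed.

Lemma abs0 : abs GRing.zero = 0.
Proof. by case: habs => _ [h _]; apply/h. Qed.

Lemma abs_gt0 x : x <> GRing.zero -> 0 < abs x.
Proof.
case: habs => _ [h _] x0; case: (abs_ge0 x) => // /esym /h; contradiction.
Qed.

Lemma absM x y : abs (GRing.mul x y) = abs x * abs y.
Proof. by case: habs => _ [_ []]. Qed.

Lemma abs1 : abs (GRing.one K) = 1.
Proof.
have h1 : 0 < abs (GRing.one K) by apply/abs_gt0/eqP/GRing.oner_neq0.
have := absM (GRing.one K) (GRing.one K); rewrite GRing.mulr1 => h.
by apply: (Rmult_eq_reg_l (abs (GRing.one K))); lra.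
Qed.

Lemma absN x : abs (GRing.opp x) = abs x.
Proof.
have hN1 : abs (GRing.opp (GRing.one K)) = 1.
  have := absM (GRing.opp (GRing.one K)) (GRing.opp (GRing.one K)).
  rewrite GRing.mulrNN GRing.mulr1 abs1.
  have := abs_ge0 (GRing.opp (GRing.one K)); nra.
by rewrite -GRing.mulN1r absM hN1 Rmult_1_l.
Qed.

Lemma abs_sub_le x y : abs (GRing.add x (GRing.opp y)) <= Rmax (abs x) (abs y).
Proof. by rewrite -(absN y); case: habs => _ [_ [_]]. Qed.

Lemma absX x k : abs (GRing.exp x k) = abs x ^ k.
Proof. by elim: k => [|k IH]; rewrite ?abs1 // GRing.exprS absM IH. Qed.

Lemma absV x : x <> GRing.zero -> abs (GRing.inv x) = / abs x.
Proof.
move=> x0; have hx := abs_gt0 x0.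
have := absM (GRing.inv x) x; rewrite GRing.mulVf ?abs1; last exact/eqP.
move=> h; apply: (Rmult_eq_reg_r (abs x)); [rewrite -h Rinv_l|]; lra.
Qed.

End NonarchimedeanAbs.

Lemma powerRZ_le_nonneg a b n : 0 < a <= b -> (0 <= n)%Z -> powerRZ a n <= powerRZ b n.
Proof.
move=> hab /Z_of_nat_complete [k ->]; rewrite -!pow_powerRZ; apply: pow_incr; lra.
Qed.

Lemma powerRZ_ge_nonpos a b n : 0 < a <= b -> (n <= 0)%Z -> powerRZ b n <= powerRZ a n.
Proof.
move=> hab hn; have [k hk] : exists k, n = (- Z.of_nat k)%Z by exists (Z.to_nat (- n)); lia.
rewrite hk !powerRZ_neg' -!pow_powerRZ.
apply: Rinv_le_contravar; [apply: pow_lt|apply: pow_incr]; lra.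
Qed.

Lemma powerRZ_le_max a rho b n : 0 < a <= rho -> rho <= b ->
  powerRZ rho n <= Rmax (powerRZ a n) (powerRZ b n).
Proof.
move=> ha hb; case: (Z_le_gt_dec 0 n) => hn.
- apply: Rle_trans (Rmax_r _ _); apply: powerRZ_le_nonneg => //; lra.
- apply: Rle_trans (Rmax_l _ _); apply: powerRZ_ge_nonpos => //; lia.
Qed.

Lemma powerRZ_opp_mul a n : 0 < a -> powerRZ a (- n) * powerRZ a n = 1.
Proof. by move=> ha; rewrite -powerRZ_add ?Z.add_opp_diag_l //; lra. Qed.

Lemma finite_support_bounded (f : Z -> R) (N : nat) :
  exists C, forall m, (Z.abs m < Z.of_nat N)%Z -> f m <= C.
Proof.
elim: N => [|N [C hC]]; first by exists 0; lia.
exists (Rmax C (Rmax (f (Z.of_nat N)) (f (- Z.of_nat N)%Z))) => m hm.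
case: (Z.eq_dec (Z.abs m) (Z.of_nat N)) => hmN.
- have [->|->] : m = Z.of_nat N \/ m = (- Z.of_nat N)%Z by lia.
  + by apply: Rle_trans (Rmax_r _ _); apply: Rmax_l.
  + by apply: Rle_trans (Rmax_r _ _); apply: Rmax_r.
- by apply: Rle_trans (Rmax_l _ _); apply: hC; lia.
Qed.

Definition lrestr (K : fieldType) (S : Z -> bool) (a : Z -> K) : Z -> K :=
  fun n => if S n then a n else GRing.zero.

Section Restriction.
Variables (K : fieldType) (a : Z -> K).

Lemma lrestr_none (S : Z -> bool) : (forall n, S n = false) -> lrestr S a = lzero K.
Proof. by move=> hS; apply: functional_extensionality => n; rewrite /lrestr hS. Qed.

Lemma lrestr_all (S : Z -> bool) : (forall n, S n) -> lrestr S a = a.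
Proof. by move=> hS; apply: functional_extensionality => n; rewrite /lrestr hS. Qed.

Lemma lrestr_split (S S1 S2 : Z -> bool) :
  (forall n, S n = S1 n || S2 n) -> (forall n, S1 n -> S2 n = false) ->
  lrestr S a = ladd (lrestr S1 a) (lrestr S2 a).
Proof.
move=> hS hdisj; apply: functional_extensionality => n; rewrite /lrestr /ladd hS.
case h1: (S1 n); first by rewrite (hdisj n h1) GRing.addr0.
by case: (S2 n); rewrite GRing.add0r.
Qed.

End Restriction.

Section ConvergentLaurentSeries.
Variables (K : fieldType) (abs : K -> R).
Hypothesis habs : nonarch_abs abs.

Lemma D_int_zero r : D_int abs r (lzero K).
Proof. by move=> rho _ eps eps0; exists 0%nat => n _; rewrite /lzero abs0 // Rmult_0_l. Qed.

Lemma D_int_restr r S a : D_int abs r a -> D_int abs r (lrestr S a).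
Proof.
move=> ha rho hrho eps eps0; have [N hN] := ha rho hrho eps eps0.
exists N => n hn; rewrite /lrestr; case: (S n); first exact: hN.
by rewrite abs0 // Rmult_0_l.
Qed.

Lemma D_int_finite_support r (a : Z -> K) N :
  (forall n, (Z.of_nat N <= Z.abs n)%Z -> a n = GRing.zero) -> D_int abs r a.
Proof. by move=> ha rho _ eps eps0; exists N => n /ha ->; rewrite abs0 // Rmult_0_l. Qed.

Lemma D_int_restr_nonneg r r' a : 0 < r' -> r < 1 -> D_int abs r a ->
  D_int abs r' (lrestr (Z.leb 0) a).
Proof.
move=> r'0 r1 ha rho hrho eps eps0; pose rho' := Rmax rho r.
have [N hN] := ha rho' ltac:(rewrite /rho' /Rmax; case: Rle_dec; lra) eps eps0.
exists N => n hn; rewrite /lrestr; case: Z.leb_spec => hn0; last by rewrite abs0 // Rmult_0_l.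
apply: Rle_lt_trans (hN n hn); apply: Rmult_le_compat_l; first exact: abs_ge0.
by apply: powerRZ_le_nonneg => //; rewrite /rho' /Rmax; case: Rle_dec; lra.
Qed.

Lemma D_int_sub r x y : 0 < r -> D_int abs r x -> D_int abs r y -> D_int abs r (lsub y x).
Proof.
move=> r0 hx hy rho hrho eps eps0.
have [N1 h1] := hx rho hrho eps eps0; have [N2 h2] := hy rho hrho eps eps0.
exists (maxn N1 N2) => n hn.
have hxn := h1 n ltac:(lia); have hyn := h2 n ltac:(lia).
have hp : 0 < powerRZ rho n by apply: powerRZ_lt; lra.
apply: Rle_lt_trans (_ : Rmax (abs (y n)) (abs (x n)) * powerRZ rho n < eps).
  by apply: Rmult_le_compat_r; [lra|apply: abs_sub_le].
by rewrite /Rmax; case: Rle_dec.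
Qed.

Lemma D_int_of_tails r a : (forall rho, r <= rho < 1 -> forall eps, 0 < eps ->
    exists N, forall k, (N <= k)%nat ->
      abs (a (Z.of_nat k)) * rho ^ k < eps /\ abs (a (- Z.of_nat k)%Z) * / rho ^ k < eps) ->
  D_int abs r a.
Proof.
move=> ha rho hrho eps eps0; have [N hN] := ha rho hrho eps eps0.
exists N => n hn; case: (Z_le_gt_dec 0 n) => hn0.
- by rewrite -(Z2Nat.id n hn0) -pow_powerRZ; apply: (proj1 (hN _ _)); lia.
- have -> : n = (- Z.of_nat (Z.to_nat (- n)))%Z by lia.
  by rewrite powerRZ_neg' -pow_powerRZ; apply: (proj2 (hN _ _)); lia.
Qed.

Lemma D_int_bounded r x rho : D_int abs r x -> r <= rho < 1 ->
  exists C, 0 < C /\ forall m, abs (x m) * powerRZ rho m <= C.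
Proof.
move=> hx hrho; have [N hN] := hx rho hrho 1 Rlt_0_1.
have [C hC] := finite_support_bounded (fun m => abs (x m) * powerRZ rho m) N.
exists (Rmax 1 C); split; first by apply: Rlt_le_trans (Rmax_l _ _); lra.
move=> m; case: (Z_le_gt_dec (Z.of_nat N) (Z.abs m)) => hm.
- by apply: Rle_trans (Rmax_l _ _); apply: Rlt_le; apply: hN.
- by apply: Rle_trans (Rmax_r _ _); apply: hC; lia.
Qed.

End ConvergentLaurentSeries.

Lemma laddsubK (K : fieldType) (x y : Z -> K) : ladd x (lsub y x) = y.
Proof.
by apply: functional_extensionality => n; rewrite /ladd /lsub GRing.addrC GRing.subrK.
Qed.

Section NiceOpenLattices.
Variables (K : fieldType) (abs : K -> R).
Hypothesis habs : nonarch_abs abs.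

Lemma nice_open_lattice_indlim L : nice_open_lattice abs L -> indlim_open_lattice abs L.
Proof.
case=> hL [x0 [[r0 [hr0 hx0]] hsub]]; split=> // r hr.
split=> [x [] //|x [hLx hDx]].
pose rho := Rmax r r0.
have hrho : r0 <= rho < 1 /\ r <= rho by rewrite /rho /Rmax; case: Rle_dec; lra.
have [C [C0 hC]] := D_int_bounded hx0 (proj1 hrho).
exists ((rho, (rho + 1) / 2) :: nil), (/ C); split; first exact: Rinv_0_lt_compat.
split=> [q [<-|[]] /=|y hDy hy]; first lra.
split=> //; rewrite -(laddsubK x y); case: hL => _ [_ [hadd _]]; apply: hadd => //.
apply: hsub; split; first by exists r; split=> //; apply: D_int_sub => //; lra.
move=> n; have [hyn _] := hy _ (or_introl erefl) n; rewrite /= in hyn.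
have hrho0 : 0 < rho by lra.
have hu := powerRZ_lt _ (- n)%Z hrho0; have hv := powerRZ_lt _ n hrho0.
have ha := abs_ge0 habs (x0 (- n)%Z); have hb := abs_ge0 habs (lsub y x n).
have huv := powerRZ_opp_mul n hrho0.
have -> : abs (x0 (- n)%Z) * abs (lsub y x n) =
  (abs (x0 (- n)%Z) * powerRZ rho (- n)) * (abs (lsub y x n) * powerRZ rho n).
  by rewrite -[LHS]Rmult_1_r -huv; ring.
rewrite -(Rinv_r C); last lra.
have hx0n := hC (- n)%Z.
by apply: Rmult_le_compat => //; apply: Rmult_le_pos; lra.
Qed.

End NiceOpenLattices.

Lemma pow_le1_antimono x a b : 0 <= x <= 1 -> (a <= b)%nat -> x ^ b <= x ^ a.
Proof.
move=> hx hab; rewrite -(subnKC hab) addnE pow_add; set c := (b - a)%nat.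
have : x ^ c <= 1 by rewrite -(pow1 c); apply: pow_incr; lra.
have := pow_le x a (proj1 hx); have := pow_le x c (proj1 hx); nra.
Qed.

Lemma pow_eventually_le x e : 0 <= x < 1 -> 0 < e -> exists n, x ^ n <= e.
Proof.
move=> hx he; have [n hn] := pow_lt_1_zero x ltac:(rewrite Rabs_pos_eq; lra) e he.
by exists n; have := hn n (le_n n); rewrite Rabs_pos_eq; [lra|apply: pow_le; lra].
Qed.

Lemma bernoulli_sub x n : 0 <= x <= 1 -> 1 - INR n * x <= (1 - x) ^ n.
Proof.
move=> hx; elim: n => [|n IH]; first by rewrite /=; lra.
rewrite S_INR -tech_pow_Rmult.
have := Rmult_le_compat_l (1 - x) _ _ ltac:(lra) IH; have := pos_INR n; nra.
Qed.

(* Radii tending to [1] slowly enough that [q < radius q n ^ n.+1] (Bernoulli). *)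
Definition radius (q : R) (n : nat) : R := 1 - (1 - q) / (2 * (INR n + 1)).

Section Radius.
Variable q : R.
Hypothesis hq : 0 < q < 1.

Lemma radius_gap n : 0 < 1 - radius q n /\ (1 - radius q n) * (INR n + 1) = (1 - q) / 2.
Proof.
rewrite /radius; have := pos_INR n => hn; split; last by field; lra.
by have := Rdiv_lt_0_compat (1 - q) (2 * (INR n + 1)); lra.
Qed.

Lemma radius_bounds n : q < radius q n < 1.
Proof. have := radius_gap n; have := pos_INR n; nra. Qed.

Lemma radius_pow_gt n : q < radius q n ^ n.+1.
Proof.
have [h0 h1] := radius_gap n; have := pos_INR n => hn.
have hx : 0 <= 1 - radius q n <= 1 by nra.
have := bernoulli_sub n.+1 hx; rewrite S_INR.
have -> : 1 - (1 - radius q n) = radius q n by ring.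
nra.
Qed.

Lemma radius_cofinal r : r < 1 -> exists n, r <= radius q n.
Proof.
move=> hr; have [n hn] := INR_archimed (1 - r) (1 - q) ltac:(lra).
by exists n; have := radius_gap n; have := pos_INR n; nra.
Qed.

End Radius.

Lemma floor_pow_vanish c C l eps : 0 <= c < 1 -> 0 <= C -> 0 < eps ->
  exists N, forall k, (N <= k)%nat -> C * c ^ (k %/ l.+1) < eps.
Proof.
move=> hc hC heps; pose t := eps / 2 / (C + 1).
have ht : 0 < t /\ t * (C + 1) = eps / 2 by split; rewrite /t; [apply: Rdiv_lt_0_compat|field]; lra.
have [b hb] := pow_eventually_le hc (proj1 ht).
exists (l.+1 * b)%nat => k hk.
have hbk : (b <= k %/ l.+1)%nat by nia.
have := @pow_le1_antimono c _ _ ltac:(lra) hbk; have := pow_le c (k %/ l.+1) (proj1 hc).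
nra.
Qed.

Lemma pow_le_pow_floor x l k : 0 <= x <= 1 -> x ^ k <= (x ^ l.+1) ^ (k %/ l.+1).
Proof. by move=> hx; rewrite -pow_mult; apply: pow_le1_antimono => //; nia. Qed.

Lemma pow_floor_succ_le x l k : 0 <= x <= 1 -> (x ^ l.+1) ^ (k %/ l.+1).+1 <= x ^ k.
Proof. by move=> hx; rewrite -pow_mult; apply: pow_le1_antimono => //; nia. Qed.

Fixpoint min_upto (f : nat -> nat) (m : nat) : nat :=
  if m is m'.+1 then minn (min_upto f m') (f m) else f 0%nat.

Lemma min_upto_le f m j : (j <= m)%nat -> (min_upto f m <= f j)%nat.
Proof.
elim: m => [|m IH] hj /=; first by have -> : j = 0%nat by lia.
by case: (eqVneq j m.+1) => [->|hjm]; [|have := IH ltac:(lia)]; lia.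
Qed.

Lemma min_upto_attained f m : exists j, min_upto f m = f j.
Proof.
elim: m => [|m [j IH]] /=; first by exists 0%nat.
by case: (leqP (min_upto f m) (f m.+1)) => h; [exists j|exists m.+1]; lia.
Qed.

(* [q ^ level_exponent A m j <= radius q j ^ m * q ^ A j], so a coefficient of [T ^ - m]
   of size [q ^ a] lies in the ball of radius [q ^ A j] at level [j] once [a] reaches
   [level_exponent A m j]; [nice_exponent] takes the best level [j <= m]. *)
Definition level_exponent (A : nat -> nat) (m j : nat) : nat := (A j + m %/ j.+1 + 1)%nat.

Definition nice_exponent (A : nat -> nat) (m : nat) : nat := min_upto (level_exponent A m) m.

Section WeightEstimates.
Variable q : R.
Hypothesis hq : 0 < q < 1.

Lemma inv_pow_le a b : (a <= b)%nat -> (/ q) ^ a <= (/ q) ^ b.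
Proof.
by move=> hab; apply: Rle_pow; [rewrite -Rinv_1; apply: Rinv_le_contravar; lra|exact/leP].
Qed.

Lemma nice_exponent_vanish A rho eps : 0 < rho < 1 -> 0 < eps ->
  exists N, forall m, (N <= m)%nat -> (/ q) ^ nice_exponent A m * rho ^ m < eps.
Proof.
move=> hrho heps.
have [j hj] := pow_eventually_le (x := rho) (e := q / 2) ltac:(lra) ltac:(lra).
have hrj : 0 < rho ^ j.+1 <= q / 2.
  by split; [apply: pow_lt; lra|apply: Rle_trans hj; apply: pow_le1_antimono; [lra|lia]].
pose c := rho ^ j.+1 / q.
have hcq : c * q = rho ^ j.+1 by rewrite /c; field; lra.
have hc : 0 <= c < 1 by nra.
have hq0 : 0 <= / q by apply: Rlt_le; apply: Rinv_0_lt_compat; lra.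
have [N hN] := floor_pow_vanish j hc (pow_le _ (A j + 1) hq0) heps.
exists (maxn N j) => m hm; apply: Rle_lt_trans (hN m ltac:(lia)).
have hG := @min_upto_le (level_exponent A m) m j ltac:(lia).
have -> : (/ q) ^ (A j + 1) * c ^ (m %/ j.+1) =
    (/ q) ^ (A j + 1 + m %/ j.+1) * (rho ^ j.+1) ^ (m %/ j.+1).
  by rewrite (pow_add (/ q) (A j + 1)) /c /Rdiv Rpow_mult_distr; ring.
apply: Rmult_le_compat; [apply: pow_le..|apply: inv_pow_le|apply: pow_le_pow_floor]; try lra.
by apply: (leq_trans hG); rewrite /level_exponent; lia.
Qed.

Lemma nice_weight_neg_vanish A0 l rho eps : 0 < rho < 1 -> q < rho ^ l.+1 -> 0 < eps ->
  exists N, forall k, (N <= k)%nat -> (/ q) ^ A0 * q ^ (k %/ l.+1) * / rho ^ k < eps.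
Proof.
move=> hrho hql heps; pose R := rho ^ l.+1; pose c := q / R.
have hqR : q < R := hql.
have hR1 : R <= 1 by rewrite /R -(pow1 l.+1); apply: pow_incr; lra.
have hcR : c * R = q by rewrite /c; field; lra.
have hc : 0 <= c < 1 by nra.
have hC : 0 <= (/ q) ^ A0 * / R.
  by apply: Rmult_le_pos; [apply: pow_le|]; apply: Rlt_le; apply: Rinv_0_lt_compat; lra.
have [N hN] := floor_pow_vanish l hc hC heps.
exists N => k hk; apply: Rle_lt_trans (hN k hk).
have hRb : 0 < R ^ (k %/ l.+1) by apply: pow_lt; lra.
have -> : (/ q) ^ A0 * / R * c ^ (k %/ l.+1) =
    (/ q) ^ A0 * q ^ (k %/ l.+1) * / R ^ (k %/ l.+1).+1.
  have hqA := pow_lt q A0 (proj1 hq).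
  by rewrite /c /Rdiv Rpow_mult_distr !pow_inv -tech_pow_Rmult; field; repeat split; lra.
apply: Rmult_le_compat_l.
  by apply: Rmult_le_pos; apply: pow_le; [apply: Rlt_le; apply: Rinv_0_lt_compat|]; lra.
apply: Rinv_le_contravar; first by apply: pow_lt; lra.
by apply: pow_floor_succ_le; lra.
Qed.

Lemma nice_weight_neg_bound s0 A0 l k : 0 <= s0 <= 1 -> s0 ^ l.+1 <= q ->
  s0 ^ k <= (/ q) ^ A0 * q ^ (k %/ l.+1) * q ^ A0.
Proof.
move=> hs hsl; have hqA := pow_lt q A0 (proj1 hq).
have -> : (/ q) ^ A0 * q ^ (k %/ l.+1) * q ^ A0 = q ^ (k %/ l.+1).
  by rewrite pow_inv; field; lra.
apply: Rle_trans (pow_le_pow_floor l k hs) _.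
by apply: pow_incr; split=> //; apply: pow_le; lra.
Qed.

Lemma nice_weight_pos_bound r A m j : 0 <= r <= 1 -> q <= r ^ j.+1 ->
  / r ^ m <= (/ q) ^ level_exponent A m j * q ^ A j.
Proof.
move=> hr hrj; have hqA := pow_lt q (A j) (proj1 hq).
have hqb := pow_lt q (m %/ j.+1).+1 (proj1 hq).
have -> : (/ q) ^ level_exponent A m j * q ^ A j = / q ^ (m %/ j.+1).+1.
  by rewrite /level_exponent addn1 -addnS addnE pow_add !pow_inv; field; lra.
apply: Rinv_le_contravar => //; apply: Rle_trans (pow_floor_succ_le j m hr).
by apply: pow_incr; split=> //; lra.
Qed.

End WeightEstimates.

Lemma radii_upper_bound r (rhos : list (R * R)) : r < 1 ->
  (forall q, In q rhos -> r <= fst q /\ fst q < snd q /\ snd q < 1) ->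
  exists s, r <= s < 1 /\ forall q, In q rhos -> snd q <= s.
Proof.
move=> hr; elim: rhos => [|a l IH] hl; first by exists r; split=> [|q []]; lra.
have [s [hs hsl]] := IH (fun q hq => hl q (or_intror hq)).
have ha := hl a (or_introl erefl).
exists (Rmax s (snd a)); split; first by rewrite /Rmax; case: Rle_dec; lra.
move=> q [<-|hq]; first exact: Rmax_r.
by apply: Rle_trans (Rmax_l _ _); apply: hsl.
Qed.

Lemma mul_powerRZ_le_between a r t s n e : 0 <= a -> 0 < r <= t -> t <= s ->
  a * powerRZ r n <= e -> a * powerRZ s n <= e -> a * powerRZ t n <= e.
Proof.
move=> ha ht hts hr hs; have := powerRZ_le_max n ht hts.
by rewrite /Rmax; case: Rle_dec => _ h; apply: Rle_trans (Rmult_le_compat_l _ _ _ ha h) _.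
Qed.

Definition ball_sub (K : fieldType) (abs : K -> R) (L : (Z -> K) -> Prop) (r s e : R) : Prop :=
  forall y, D_int abs r y ->
    (forall n, abs (y n) * powerRZ r n <= e /\ abs (y n) * powerRZ s n <= e) -> L y.

Section FrechetBalls.
Variables (K : fieldType) (abs : K -> R).
Hypothesis habs : nonarch_abs abs.

Lemma frechet_open_ball (L : (Z -> K) -> Prop) r : 0 < r < 1 -> L (lzero K) ->
  frechet_open abs r (fun y => L y /\ D_int abs r y) ->
  exists e s, 0 < e /\ r <= s < 1 /\ ball_sub abs L r s e.
Proof.
move=> hr hL0 [_ hU].
have [rhos [e [he [hrhos hball]]]] := hU _ (conj hL0 (@D_int_zero _ _ habs r)).
have [s [hs hsrhos]] := radii_upper_bound (proj2 hr) hrhos.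
exists e, s; do 2!split=> //; move=> y hy hye.
apply: (proj1 (hball y hy _)) => q hq n.
have -> : lsub y (lzero K) n = y n by rewrite /lsub /lzero GRing.oppr0 GRing.addr0.
have [hq1 [hq2 hq3]] := hrhos q hq; have hqs := hsrhos q hq; have [hr' hs'] := hye n.
by split; apply: mul_powerRZ_le_between (abs_ge0 habs (y n)) _ _ hr' hs'; lra.
Qed.

End FrechetBalls.

Lemma mul_le_of_weight a t w e : 0 <= a -> 0 <= e -> t <= w * e -> w * a <= 1 -> a * t <= e.
Proof. by move=> ha he hte hwa; apply: Rle_trans (Rmult_le_compat_l _ _ _ ha hte) _; nra. Qed.

Ltac decide_bool_Z :=
  move=> n /=; repeat (case: Z.leb_spec || case: Z.ltb_spec || case: Z.eqb_spec); lia.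

Section NiceDecomposition.
Variables (K : fieldType) (abs : K -> R).
Hypothesis habs : nonarch_abs abs.
Variables (L : (Z -> K) -> Prop) (lev s e : nat -> R) (x0 : Z -> K).
Hypothesis hL : is_lattice abs L.
Hypothesis hlev : forall j, 0 < lev j < 1.
Hypothesis hlev_s : forall j, lev j <= s j.
Hypothesis he : forall j, 0 < e j.
Hypothesis hball : forall j, ball_sub abs L (lev j) (s j) (e j).
Hypothesis hlev_cofinal : forall r, r < 1 -> exists j, r <= lev j.
Hypothesis hx0_neg : forall n, (0 <= n)%Z -> powerRZ (s 0%nat) n <= abs (x0 (- n)%Z) * e 0%nat.
Hypothesis hx0_pos : forall m, (0 < m)%Z -> exists j, powerRZ (lev j) (- m) <= abs (x0 m) * e j.

Lemma L_of_ball j y : D_int abs (lev j) y ->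
  (forall n, y n <> GRing.zero ->
    abs (y n) * powerRZ (lev j) n <= e j /\ abs (y n) * powerRZ (s j) n <= e j) -> L y.
Proof.
move=> hy hb; apply: hball hy _ => n.
case: (eqVneq (y n) GRing.zero) => [->|hyn]; last by apply: hb; apply/eqP.
by rewrite abs0 // Rmult_0_l; have := he j; lra.
Qed.

Variable d : Z -> K.
Hypothesis hd : L_nice abs x0 d.

Lemma L_nonneg_part : L (lrestr (Z.leb 0) d).
Proof.
have [[r [hr hdr]] hdx0] := hd; apply: (L_of_ball (j := 0%nat)).
  by apply: D_int_restr_nonneg; [exact: habs|apply: (proj1 (hlev _))|apply: (proj2 hr)|].
rewrite /lrestr => n; case: Z.leb_spec => hn0 // _.
have hsn : abs (d n) * powerRZ (s 0%nat) n <= e 0%nat.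
  apply: (mul_le_of_weight _ _ (hx0_neg hn0)); try exact: abs_ge0.
  - by have := he 0%nat; lra.
  - exact: hdx0.
split=> //; apply: Rle_trans hsn; apply: Rmult_le_compat_l; first exact: abs_ge0.
by apply: powerRZ_le_nonneg => //; have := hlev 0%nat; have := hlev_s 0%nat; lra.
Qed.

Lemma L_tail_part : exists N, L (lrestr (fun n => n <=? - Z.of_nat N.+1)%Z d).
Proof.
have [[r [hr hdr]] _] := hd; have [k hk] := hlev_cofinal (proj2 hr).
have hdk : D_int abs (lev k) d by move=> rho hrho; apply: hdr; lra.
have [N hN] := hdk (lev k) ltac:(have := hlev k; lra) (e k) (he k).
exists N; apply: (L_of_ball (j := k)); first exact: D_int_restr.
rewrite /lrestr => n; case: Z.leb_spec => hn // _.
have hdn := Rlt_le _ _ (hN n ltac:(lia)); split=> //; apply: Rle_trans hdn.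
apply: Rmult_le_compat_l; first exact: abs_ge0.
by apply: powerRZ_ge_nonpos; [have := hlev k; have := hlev_s k; lra|lia].
Qed.

Lemma L_monomial_part m : (0 < m)%Z -> L (lrestr (fun n => n =? - m)%Z d).
Proof.
move=> hm; have [_ hdx0] := hd; have [j hj] := hx0_pos hm.
apply: (L_of_ball (j := j)).
  apply: (D_int_finite_support habs (N := (Z.to_nat m).+1)) => n hn.
  by rewrite /lrestr; case: Z.eqb_spec => //; lia.
rewrite /lrestr => n; case: Z.eqb_spec => [->|//] _.
have hdm : abs (d (- m)%Z) * powerRZ (lev j) (- m) <= e j.
  apply: (mul_le_of_weight _ _ hj); try exact: abs_ge0; first by have := he j; lra.
  by have := hdx0 (- m)%Z; rewrite Z.opp_involutive.
split=> //; apply: Rle_trans hdm; apply: Rmult_le_compat_l; first exact: abs_ge0.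
by apply: powerRZ_ge_nonpos; [have := hlev j; have := hlev_s j; lra|lia].
Qed.

Lemma L_window_part M : L (lrestr (fun n => (- Z.of_nat M <=? n) && (n <? 0))%Z d).
Proof.
elim: M => [|M IH].
  by rewrite lrestr_none; [case: hL => _ []|decide_bool_Z].
rewrite (lrestr_split d (S1 := (fun n => (- Z.of_nat M <=? n) && (n <? 0))%Z)
  (S2 := (fun n => n =? - Z.of_nat M.+1)%Z)); try decide_bool_Z.
by case: hL => _ [_ [hadd _]]; apply: hadd IH (L_monomial_part _); lia.
Qed.

Lemma L_of_L_nice : L d.
Proof.
have [N hN] := L_tail_part; case: hL => _ [_ [hadd _]].
rewrite -(lrestr_all (S := fun=> true) d) //.
rewrite (lrestr_split d (S1 := Z.leb 0) (S2 := (fun n => n <? 0)%Z)); try decide_bool_Z.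
apply: (hadd); first exact: L_nonneg_part.
rewrite (lrestr_split d (S1 := (fun n => n <=? - Z.of_nat N.+1)%Z)
  (S2 := (fun n => (- Z.of_nat N <=? n) && (n <? 0))%Z)); try decide_bool_Z.
exact: hadd hN (L_window_part N).
Qed.

End NiceDecomposition.

Definition nice_weight (K : fieldType) (pi : K) (A : nat -> nat) (l : nat) : Z -> K :=
  fun n => if (n <=? 0)%Z
    then GRing.mul (GRing.exp (GRing.inv pi) (A 0%nat)) (GRing.exp pi (Z.to_nat (- n) %/ l.+1))
    else GRing.exp (GRing.inv pi) (nice_exponent A (Z.to_nat n)).

Section IndlimOpenLattices.
Variables (K : fieldType) (abs : K -> R) (pi : K).
Hypothesis habs : nonarch_abs abs.
Hypothesis hpi : 0 < abs pi < 1.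

Local Notation q := (abs pi).

Lemma abs_inv_pi_exp n : abs (GRing.exp (GRing.inv pi) n) = (/ q) ^ n.
Proof.
have pi0 : pi <> GRing.zero by move=> h; move: hpi; rewrite h abs0 //; lra.
by rewrite absX // absV.
Qed.

Lemma abs_nice_weight_nonpos A l k :
  abs (nice_weight pi A l (- Z.of_nat k)) = (/ q) ^ A 0%nat * q ^ (k %/ l.+1).
Proof.
rewrite /nice_weight; case: Z.leb_spec => [_|]; last lia.
by rewrite absM // abs_inv_pi_exp absX // Z.opp_involutive Nat2Z.id.
Qed.

Lemma abs_nice_weight_pos A l m : (0 < m)%nat ->
  abs (nice_weight pi A l (Z.of_nat m)) = (/ q) ^ nice_exponent A m.
Proof.
move=> hm; rewrite /nice_weight; case: Z.leb_spec => [|_]; first lia.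
by rewrite abs_inv_pi_exp Nat2Z.id.
Qed.

Lemma nice_weight_robba A l : robba abs (nice_weight pi A l).
Proof.
have hq : 0 < q < 1 := hpi.
have [hr0 hr1] := radius_bounds hq l.
exists (radius q l); split; first lra.
apply: D_int_of_tails => rho hrho eps eps0.
have hql : q < rho ^ l.+1.
  by apply: Rlt_le_trans (radius_pow_gt hq l) _; apply: pow_incr; lra.
have [N1 hN1] := nice_exponent_vanish hq A (rho := rho) ltac:(lra) eps0.
have [N2 hN2] := nice_weight_neg_vanish hq (A 0%nat) (rho := rho) ltac:(lra) hql eps0.
exists (maxn N1 N2).+1 => k hk; rewrite abs_nice_weight_nonpos ?abs_nice_weight_pos; last lia.
by split; [apply: hN1|apply: hN2]; lia.
Qed.

Lemma indlim_level_ball L : indlim_open_lattice abs L -> forall r, 0 < r < 1 ->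
  exists As : nat * R, r <= As.2 < 1 /\ ball_sub abs L r As.2 (q ^ As.1).
Proof.
case=> hL hopen r hr; have hL0 : L (lzero K) by case: hL => _ [].
have [e [s [he [hs hball]]]] := frechet_open_ball habs hr hL0 (hopen r hr).
have [A hA] := pow_eventually_le (x := q) ltac:(lra) he.
exists (A, s); split=> // y hy /= hyA.
by apply: hball => // n; have := hyA n; lra.
Qed.

Lemma indlim_open_lattice_nice L : indlim_open_lattice abs L -> nice_open_lattice abs L.
Proof.
move=> hLi; have hq : 0 < q < 1 := hpi.
have hlev j : 0 < radius q j < 1 by have := radius_bounds hq j; lra.
have [f hf] := choice _ (fun j => indlim_level_ball hLi (hlev j)).
pose A j := (f j).1; pose s j := (f j).2.
have hs j : radius q j <= s j < 1 by case: (hf j).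
have hball j : ball_sub abs L (radius q j) (s j) (q ^ A j) by case: (hf j).
have [l hl] : exists l, s 0%nat ^ l.+1 <= q.
  have hs0 : 0 <= s 0%nat <= 1 by have := hs 0%nat; have := hlev 0%nat; lra.
  have [l hl] := pow_eventually_le (x := s 0%nat) ltac:(have := hs 0%nat; lra) (proj1 hq).
  by exists l; apply: Rle_trans hl; apply: pow_le1_antimono.
split; first by case: hLi.
exists (nice_weight pi A l); split; first exact: nice_weight_robba.
apply: (L_of_L_nice habs (lev := radius q) (s := s) (e := fun j => q ^ A j)) => //.
- by case: hLi.
- by move=> j; have := hs j; lra.
- by move=> j; apply: pow_lt; lra.
- exact: radius_cofinal.
- move=> n hn; rewrite -(Z2Nat.id n hn) -pow_powerRZ abs_nice_weight_nonpos.
  apply: (nice_weight_neg_bound hq) => //; have := hs 0%nat; have := hlev 0%nat; lra.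
- move=> m hm; have [j hj] := min_upto_attained (level_exponent A (Z.to_nat m)) (Z.to_nat m).
  exists j; rewrite -(Z2Nat.id m (Z.lt_le_incl _ _ hm)) abs_nice_weight_pos; last lia.
  rewrite powerRZ_neg' -pow_powerRZ /nice_exponent hj.
  by apply: (nice_weight_pos_bound hq); [have := hlev j; lra|apply: Rlt_le; apply: radius_pow_gt].
Qed.

End IndlimOpenLattices.

Lemma lc_open_ext (K : fieldType) (abs : K -> R) (OL1 OL2 : ((Z -> K) -> Prop) -> Prop) U :
  (forall L, OL1 L <-> OL2 L) -> lc_open abs OL1 U -> lc_open abs OL2 U.
Proof.
move=> hOL [hU hopen]; split=> // x /hopen [L [/hOL hL hxL]].
by exists L.
Qed.

Theorem proposition5p13 (p : nat) (K : fieldType) (abs : K -> R)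
  (hp : prime p) (hodd : odd p) (hK : padic_cdvf p abs)
  (U : (Z -> K) -> Prop) :
  lc_open abs (nice_open_lattice abs) U <-> lc_open abs (indlim_open_lattice abs) U.
Proof.
have [habs [_ [[pi [hpi _]] _]]] := hK.
have hOL L : nice_open_lattice abs L <-> indlim_open_lattice abs L.
  by split; [exact: nice_open_lattice_indlim|exact: (indlim_open_lattice_nice habs hpi)].
by split; apply: lc_open_ext => L; [|symmetry].
Qed.
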